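(* Let $G=\langle X\mid\mathcal R\rangle$ be a group, $A,B\le G$ subgroups and $\phi:A\to B$ an isomorphism, and let $H=\langle X\cup\{t\}\mid\mathcal R,\ t^{-1}at=\phi(a)\ (a\in A)\rangle$ be the HNN-extension. Suppose $g_1\in G$ is not a proper power of any element of $G$. Then the image of $g_1$ in $H$ is a proper power in $H$ if and only if there exist $k\ge2$ and $g_2\in G$ such that $g_1$ is conjugate to $g_2^k$ in $H$.
   Context: An element $g$ of a group $K$ is a proper power in $K$ if $g=h^k$ for some $h\in K$ and some integer $k\ge2$. *)

From mathcomp Require Import all_boot.
Set Implicit Arguments. Unset Strict Implicit. Unset Printing Implicit Defensive.
Local Open Scope group_scope.

Definition is_subgroup (G : groupType) (A : G -> Prop) : Prop :=
  A 1 /\ (forall x y, A x -> A y -> A (x * y^-1)).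

Definition is_hom (G K : groupType) (f : G -> K) : Prop :=
  forall x y, f (x * y) = f x * f y.

Definition is_iso_on (G : groupType) (A B : G -> Prop) (phi : G -> G) : Prop :=
  [/\ (forall a, A a -> B (phi a)),
      (forall a b, A a -> A b -> phi (a * b) = phi a * phi b),
      (forall a b, A a -> A b -> phi a = phi b -> a = b)
    & (forall b, B b -> exists2 a, A a & phi a = b)].

(* (H, iota, t) is the HNN-extension of G with stable letter t associated to
   phi : A -> B, i.e. H = < G, t | t^-1 a t = phi(a) (a in A) >; characterised
   by the universal property of this presentation: iota : G -> H is the
   canonical map, and H is the universal group generated by a homomorphic
   image of G and an element t subject to the relations t^-1 a t = phi a. *)
Definition is_HNN_extension (G : groupType) (A : G -> Prop) (phi : G -> G)
    (H : groupType) (iota : G -> H) (t : H) : Prop :=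
  [/\ is_hom iota,
      (forall a, A a -> t^-1 * iota a * t = iota (phi a))
    & (forall (K : groupType) (f : G -> K) (s : K),
          is_hom f ->
          (forall a, A a -> s^-1 * f a * s = f (phi a)) ->
          exists! F : H -> K, [/\ is_hom F, (forall g, F (iota g) = f g) & F t = s])].

Definition proper_power (K : groupType) (g : K) : Prop :=
  exists (h : K) (k : nat), (2 <= k)%N /\ g = h ^+ k.

(** Letting [H] act on normal forms built from chosen coset
    representatives of [A] and [B] proves Britton's lemma: a reduced word in the
    stable letter containing [t] at least once never represents an element of [G].
    Consequently all reduced words representing one element have the same length.
    Every element of [H] is conjugate either into [G] (elliptic) or to a cyclically
    reduced word of positive length (hyperbolic), and powers of hyperbolic elements
    are hyperbolic.  No element is both: for cyclically reduced [w] the reduced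
    length of [w^n] is [n |w|], whereas [c^-1 g^n c] with [g] in [G] is represented
    by words of length at most [2 |c|].  Hence if [g1 = h^k] then [h] is elliptic,
    say [h^c = g2], and [g1^c = g2^k]; the converse is immediate. *)

From mathcomp Require Import all_boot.
From HB Require Import structures.
From mathcomp Require Import boolp classical_sets.
Set Implicit Arguments. Unset Strict Implicit. Unset Printing Implicit Defensive.
Local Open Scope group_scope.

Record sym (Y : Type) := Sym {
  sym_fun :> Y -> Y;
  sym_inv : Y -> Y;
  sym_funK : cancel sym_fun sym_inv;
  sym_invK : cancel sym_inv sym_fun }.

Section SymGroup.
Variable Y : Type.

Lemma sym_eq (p q : sym Y) : p =1 q -> p = q.
Proof.
case: p q => f g fK gK [f' g' fK' gK'] /= /funext Ef; subst f'.
have Eg : g = g' by apply/funext => y; rewrite -{1}[y]gK' fK.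
by subst g'; congr Sym; apply: Prop_irrelevance.
Qed.

Lemma sym_compK (p q : sym Y) : cancel (p \o q) (sym_inv q \o sym_inv p).
Proof. by move=> y /=; rewrite !sym_funK. Qed.
Lemma sym_compVK (p q : sym Y) : cancel (sym_inv q \o sym_inv p) (p \o q).
Proof. by move=> y /=; rewrite !sym_invK. Qed.

Definition sym_mul (p q : sym Y) : sym Y := Sym (sym_compK p q) (sym_compVK p q).
Definition sym_one : sym Y := @Sym Y id id (fun _ => erefl) (fun _ => erefl).
Definition sym_invg (p : sym Y) : sym Y := Sym (@sym_invK _ p) (@sym_funK _ p).

HB.instance Definition _ := gen_eqMixin (sym Y).
HB.instance Definition _ := gen_choiceMixin (sym Y).

Lemma sym_mulA : associative sym_mul. Proof. by move=> *; apply: sym_eq. Qed.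
Lemma sym_mul1g : left_id sym_one sym_mul. Proof. by move=> *; apply: sym_eq. Qed.
Lemma sym_mulg1 : right_id sym_one sym_mul. Proof. by move=> *; apply: sym_eq. Qed.
Lemma sym_mulVg : left_inverse sym_one sym_invg sym_mul.
Proof. by move=> p; apply: sym_eq => y /=; rewrite sym_funK. Qed.
Lemma sym_mulgV : right_inverse sym_one sym_invg sym_mul.
Proof. by move=> p; apply: sym_eq => y /=; rewrite sym_invK. Qed.

HB.instance Definition _ :=
  isGroup.Build (sym Y) sym_mulA sym_mul1g sym_mulg1 sym_mulVg sym_mulgV.

Lemma symM (p q : sym Y) y : (p * q) y = p (q y). Proof. by []. Qed.

End SymGroup.

Section Homomorphisms.
Variables (K1 K2 : groupType) (f : K1 -> K2).
Hypothesis fM : is_hom f.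

Lemma hom1 : f 1 = 1.
Proof. by apply: (@mulgI _ (f 1)); rewrite -fM !mulg1. Qed.
Lemma homV x : f x^-1 = (f x)^-1.
Proof. by apply: (@mulgI _ (f x)); rewrite -fM !mulgV hom1. Qed.
Lemma homX x n : f (x ^+ n) = f x ^+ n.
Proof. by elim: n => [|n IH]; rewrite ?hom1 // !expgS fM IH. Qed.

End Homomorphisms.

Section Subgroups.
Variables (G : groupType) (S : G -> Prop).
Hypothesis sS : is_subgroup S.

Lemma subgroup1 : S 1. Proof. by case: sS. Qed.
Lemma subgroupV x : S x -> S x^-1.
Proof. by case: sS => S1 SM Sx; have := SM 1 x S1 Sx; rewrite mul1g. Qed.
Lemma subgroupM x y : S x -> S y -> S (x * y).
Proof. by move=> Sx /subgroupV Sy; have := proj2 sS x y^-1 Sx Sy; rewrite invgK. Qed.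
Lemma subgroupVE x : S x^-1 = S x.
Proof. by apply: propext; split=> /subgroupV //; rewrite invgK. Qed.
Lemma subgroupMl x y : S x -> S (x * y) = S y.
Proof.
move=> Sx; apply: propext; split; last exact: subgroupM.
by rewrite -{2}[y](mulKg x); apply: subgroupM; apply: subgroupV.
Qed.

Definition coset_rep (x : G) : G :=
  if `[< S x >] then 1 else xget 1 (fun r => S (x * r^-1)).

Lemma coset_repP x : S (x * (coset_rep x)^-1).
Proof.
rewrite /coset_rep; case: ifPn => [/asboolP Sx|_]; first by rewrite invg1 mulg1.
by case: xgetP => // /(_ x); rewrite mulgV => /(_ subgroup1).
Qed.

Lemma coset_rep_mull s x : S s -> coset_rep (s * x) = coset_rep x.
Proof.
move=> Ss; rewrite /coset_rep (subgroupMl _ Ss); congr (if _ then _ else _).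
by congr xget; apply/funext => r; rewrite -mulgA (subgroupMl _ Ss).
Qed.

Lemma coset_rep_eq1 x : (coset_rep x = 1) <-> S x.
Proof.
split=> [E|Sx]; last by rewrite /coset_rep asboolT.
by have := coset_repP x; rewrite E invg1 mulg1.
Qed.

Lemma coset_rep_id x : coset_rep (coset_rep x) = coset_rep x.
Proof.
have E : coset_rep x = (x * (coset_rep x)^-1)^-1 * x by rewrite invgM invgK mulgVK.
by rewrite {1}E coset_rep_mull //; apply/subgroupV/coset_repP.
Qed.

End Subgroups.

Lemma size_flatten_nseq (T : Type) (L : seq T) k :
  size (flatten (nseq k L)) = (k * size L)%N.
Proof. by elim: k => [|k IH] //=; rewrite size_cat IH mulSn. Qed.

Section LeftTranslation.
Variable K : groupType.

Lemma ltransK (x : K) :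
  cancel (fun p : K * bool => (x * p.1, p.2)) (fun p => (x^-1 * p.1, p.2)).
Proof. by case=> y b /=; rewrite mulKg. Qed.
Lemma ltransVK (x : K) :
  cancel (fun p : K * bool => (x^-1 * p.1, p.2)) (fun p => (x * p.1, p.2)).
Proof. by case=> y b /=; rewrite mulVKg. Qed.

Definition ltrans (x : K) : sym (K * bool) := Sym (ltransK x) (ltransVK x).

Lemma ltrans_hom : is_hom ltrans.
Proof. by move=> x y; apply: sym_eq => -[p b] /=; rewrite mulgA. Qed.

Definition toggle_fun (P : K -> Prop) (p : K * bool) := (p.1, p.2 (+) ~~ `[< P p.1 >]).
Lemma toggle_funK P : involutive (toggle_fun P).
Proof. by case=> y b; rewrite /toggle_fun /= -addbA addbb addbF. Qed.
Definition toggle (P : K -> Prop) : sym (K * bool) := Sym (toggle_funK P) (toggle_funK P).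

Lemma toggle_conj_hom P : is_hom (fun x => toggle P * ltrans x * toggle P).
Proof.
have ff : toggle P * toggle P = 1 by apply: sym_eq => p /=; rewrite toggle_funK.
by move=> x y; rewrite ltrans_hom !mulgA -[_ * toggle P * toggle P]mulgA ff mulg1.
Qed.

Lemma toggle_ltrans P x :
  (forall h, P (x * h) = P h) -> toggle P * ltrans x * toggle P = ltrans x.
Proof.
by move=> Px; apply: sym_eq => -[y b] /=; rewrite /toggle_fun /= Px -addbA addbb addbF.
Qed.

End LeftTranslation.

Section HNN.
Variables (G : groupType) (A B : G -> Prop) (phi : G -> G).
Variables (H : groupType) (iota : G -> H) (t : H).
Hypotheses (sA : is_subgroup A) (sB : is_subgroup B) (iso : is_iso_on A B phi).
Hypothesis hnn : is_HNN_extension A phi iota t.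

Lemma iotaM : is_hom iota. Proof. by case: hnn. Qed.
Lemma iota1 : iota 1 = 1. Proof. exact: hom1 iotaM. Qed.
Lemma iotaV x : iota x^-1 = (iota x)^-1. Proof. exact: (homV iotaM x). Qed.

Lemma iota_conj_t a : A a -> t^-1 * iota a * t = iota (phi a).
Proof. by case: hnn => _ + _; apply. Qed.

(* Both homomorphisms agree on the generators, so uniqueness in the universal
   property forces [toggle P] to commute with every left translation; evaluating
   at [(1, false)] gives [P h]. *)
Lemma hnn_ind (P : H -> Prop) :
  P 1 -> (forall g h, P (iota g * h) = P h) -> (forall h, P (t * h) = P h) ->
  forall h, P h.
Proof.
move=> P1 Piota Pt h.
case: hnn => _ _ /(_ _ (@ltrans H \o iota) (ltrans t)) [].
- by move=> x y /=; rewrite iotaM ltrans_hom.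
- move=> a Aa; apply: sym_eq => -[y b] /=.
  by rewrite !mulgA -(iota_conj_t Aa).
move=> F [_ Funiq].
have E1 : F = @ltrans H by apply: Funiq; split=> //; apply: ltrans_hom.
have E2 : F = (fun x => toggle P * ltrans x * toggle P).
  apply: Funiq; split; first exact: toggle_conj_hom.
  - by move=> g /=; rewrite toggle_ltrans.
  - by rewrite toggle_ltrans.
have := congr1 (fun F : H -> sym (H * bool) => F h (1, false)) (etrans (esym E1) E2).
by rewrite /= /toggle_fun /= asboolT // mulg1 => -[/esym/negbFE/asboolP].
Qed.

Definition tlet (e : bool) := if e then t else t^-1.

Lemma tletV e : (tlet e)^-1 = tlet (~~ e).
Proof. by case: e; rewrite /tlet ?invgK. Qed.

(* The word [(g1, e1) :: ... :: (gn, en)] stands for [g1 t^e1 ... gn t^en]. *)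
Definition word_val (M : seq (G * bool)) : H :=
  foldr (fun u h => iota u.1 * tlet u.2 * h) 1 M.

Lemma word_val_cons u M : word_val (u :: M) = iota u.1 * tlet u.2 * word_val M.
Proof. by []. Qed.

Lemma word_val_cat M N : word_val (M ++ N) = word_val M * word_val N.
Proof. by elim: M => [|u M IH] /=; rewrite ?mul1g // IH !mulgA. Qed.

Lemma word_val_rcons M u : word_val (rcons M u) = word_val M * iota u.1 * tlet u.2.
Proof. by rewrite -cats1 word_val_cat /= mulg1 mulgA. Qed.

Definition word_lmul x (M : seq (G * bool)) :=
  if M is (g, e) :: M' then (x * g, e) :: M' else M.

Lemma size_word_lmul x M : size (word_lmul x M) = size M.
Proof. by case: M => [|[]]. Qed.

Lemma word_val_lmul x M : M != [::] -> word_val (word_lmul x M) = iota x * word_val M.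
Proof. by case: M => [|[g e] M] //= _; rewrite iotaM !mulgA. Qed.

Lemma word_mull x M y : exists N z,
  size N = size M /\ iota x * (word_val M * iota y) = word_val N * iota z.
Proof.
have [->|nzM] := eqVneq M [::]; first by exists [::], (x * y); rewrite /= !mul1g iotaM.
by exists (word_lmul x M), y; rewrite size_word_lmul mulgA word_val_lmul.
Qed.

Lemma word_surj h : exists M y, h = word_val M * iota y.
Proof.
pose P h := exists M y, h = word_val M * iota y.
have Piota g h0 : P h0 -> P (iota g * h0).
  by case=> M [y ->]; have [N [z [_ ->]]] := word_mull g M y; exists N, z.
have Ptlet e h0 : P h0 -> P (tlet e * h0).
  by case=> M [y ->]; exists ((1, e) :: M), y; rewrite word_val_cons iota1 mul1g mulgA.
apply: (hnn_ind (P := P)) => [|g h0|h0].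
- by exists [::], 1; rewrite iota1 mulg1.
- apply: propext; split; last exact: Piota.
  by move/(Piota g^-1); rewrite mulgA -iotaM mulVg iota1 mul1g.
- apply: propext; split; last exact: (Ptlet true).
  by move/(Ptlet false); rewrite mulgA mulVg mul1g.
Qed.

Definition tdom (e : bool) := if e then B else A.

Lemma tdom_subgroup e : is_subgroup (tdom e). Proof. by case: e. Qed.

Definition phi_inv (b : G) : G := xget 1 (fun a => A a /\ phi a = b).

Lemma phi_invP b : B b -> A (phi_inv b) /\ phi (phi_inv b) = b.
Proof.
case: iso => _ _ _ /(_ b) phi_onto Bb; rewrite /phi_inv.
by case: xgetP => // /(_ _) nP; have [a Aa Ea] := phi_onto Bb; case: (nP a).
Qed.

Lemma phi_invK a : A a -> phi_inv (phi a) = a.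
Proof.
case: iso => phiA _ phi_inj _ Aa.
by have [Aa' Ea'] := phi_invP (phiA a Aa); apply: phi_inj.
Qed.

(* [tconj e x] is [t^e x t^-e], an element of [G] for [x] in [tdom e]. *)
Definition tconj (e : bool) (x : G) := if e then phi_inv x else phi x.

Lemma tconj_tdom e x : tdom e x -> tdom (~~ e) (tconj e x).
Proof. by case: iso e => phiA _ _ _ [] /= Sx; [case: (phi_invP Sx) | apply: phiA]. Qed.

Lemma tconjK e x : tdom e x -> tconj (~~ e) (tconj e x) = x.
Proof. by case: e => /= Sx; [case: (phi_invP Sx) | apply: phi_invK]. Qed.

Lemma tlet_iota_tlet e x : tdom e x -> tlet e * iota x * tlet (~~ e) = iota (tconj e x).
Proof.
case: e => /= Sx; last exact: iota_conj_t.
have [Ax Ex] := phi_invP Sx.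
by rewrite -{1}Ex -(iota_conj_t Ax) !mulgA mulgV mul1g mulgK.
Qed.

Lemma tconjM e x y : tdom e x -> tdom e y -> tconj e (x * y) = tconj e x * tconj e y.
Proof.
case: iso e => _ phiM phi_inj _ [] /= Sx Sy; last exact: phiM.
have [Ax Ex] := phi_invP Sx; have [Ay Ey] := phi_invP Sy.
have [Axy Exy] := phi_invP (subgroupM sB Sx Sy).
by apply: phi_inj => //; [apply: subgroupM | rewrite phiM // Ex Ey].
Qed.

(* A pair [(g0, [:: (e1, r1); ...; (en, rn)])] stands for [g0 t^e1 r1 ... t^en rn]:
   it is a normal form when every [ri] is the chosen representative of its coset
   of [tdom ei] and no [t^e 1 t^-e] occurs. *)
Fixpoint normal_seq (l : seq (bool * G)) : Prop :=
  match l with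
  | [::] => True
  | (e, r) :: l' => [/\ coset_rep (tdom e) r = r,
                       r = 1 -> (if l' is (e', _) :: _ then e' <> ~~ e else True)
                     & normal_seq l']
  end.

Definition act_t (e : bool) (w : G * seq (bool * G)) : G * seq (bool * G) :=
  let r := coset_rep (tdom e) w.1 in
  let x := tconj e (w.1 * r^-1) in
  match w.2 with
  | (e', g1) :: l' =>
      if (r == 1) && (e' == ~~ e) then (x * g1, l') else (x, (e, r) :: w.2)
  | [::] => (x, [:: (e, r)])
  end.

Definition head_is (e : bool) (l : seq (bool * G)) :=
  if l is (e', _) :: _ then e' == e else false.

Lemma act_t_normal e w : normal_seq w.2 -> normal_seq (act_t e w).2.
Proof.
case: w => g0 l /= Nl; rewrite /act_t /=.
have rep_id := coset_rep_id (tdom_subgroup e) g0.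
case: l Nl => [|[e' g1] l'] //= [R1 N1 Nl'].
case: ifP => [_ //|/negbT]; rewrite negb_and => not_cancel.
split=> // r1; move: not_cancel; rewrite r1 eqxx /=.
by move=> /eqP.
Qed.

Lemma act_t_push e g0 l : ~~ ((coset_rep (tdom e) g0 == 1) && head_is (~~ e) l) ->
  act_t e (g0, l) =
    (tconj e (g0 * (coset_rep (tdom e) g0)^-1), (e, coset_rep (tdom e) g0) :: l).
Proof. by move=> h; rewrite /act_t /=; case: l h => [|[e1 g1] l1] //= /negbTE ->. Qed.

Lemma act_t_cancel e e' g0 g1 l : tdom e g0 -> e' = ~~ e ->
  act_t e (g0, (e', g1) :: l) = (tconj e g0 * g1, l).
Proof.
move=> /(coset_rep_eq1 (tdom_subgroup e)) r1 ->.
by rewrite /act_t /= r1 !eqxx /= invg1 mulg1.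
Qed.

Lemma act_t_mull e s w : tdom e s ->
  act_t e (s * w.1, w.2) = (tconj e s * (act_t e w).1, (act_t e w).2).
Proof.
case: w => g0 l Ss; rewrite /act_t /= (coset_rep_mull (tdom_subgroup e) _ Ss).
rewrite -mulgA (tconjM Ss (coset_repP (tdom_subgroup e) g0)).
by case: l => [|[e' g1] l'] //=; case: ifP; rewrite ?mulgA.
Qed.

Lemma act_tK e w : normal_seq w.2 -> act_t (~~ e) (act_t e w) = w.
Proof.
case: w => g0 l /= Nl.
have sS := tdom_subgroup.
set r := coset_rep (tdom e) g0.
have Sx := tconj_tdom (coset_repP (sS e) g0).
have [/andP[/eqP r1 hd]|push] := boolP ((r == 1) && head_is (~~ e) l); last first.
  rewrite (act_t_push push) act_t_cancel ?negbK // tconjK ?mulgVK //.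
  exact: (coset_repP (sS e)).
case: l Nl hd => [|[e' g1] l'] //= [R1 N1 Nl'] /eqP Ee; subst e'.
have Sg0 : tdom e g0 by apply/(coset_rep_eq1 (sS e)).
have Sx0 := tconj_tdom Sg0.
rewrite act_t_cancel // act_t_push.
  by rewrite (coset_rep_mull (sS _) _ Sx0) R1 mulgK tconjK.
rewrite (coset_rep_mull (sS _) _ Sx0) R1 negbK.
have [g11|] := eqVneq g1 1; last by [].
case: l' N1 Nl' => [|[e2 g2] l2] //= N1 _.
by apply/eqP => E2; apply: (N1 g11); rewrite E2 negbK.
Qed.

Definition nform := {w : G * seq (bool * G) | normal_seq w.2}.

Lemma nform_eq (u v : nform) : sval u = sval v -> u = v.
Proof.
by case: u v => u pu [v pv] /= E; subst v; congr exist; apply: Prop_irrelevance.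
Qed.

Definition nf_mul (g : G) (w : nform) : nform :=
  exist _ (g * (sval w).1, (sval w).2) (svalP w).
Definition nf_t (e : bool) (w : nform) : nform :=
  exist _ (act_t e (sval w)) (act_t_normal e (svalP w)).

Lemma nf_mulK g : cancel (nf_mul g) (nf_mul g^-1).
Proof. by move=> [[a b] p]; apply: nform_eq => /=; rewrite mulKg. Qed.
Lemma nf_mulVK g : cancel (nf_mul g^-1) (nf_mul g).
Proof. by move=> [[a b] p]; apply: nform_eq => /=; rewrite mulVKg. Qed.
Lemma nf_tK e : cancel (nf_t e) (nf_t (~~ e)).
Proof. by move=> w; apply: nform_eq; apply: act_tK; apply: (svalP w). Qed.

Definition nf_perm_iota (g : G) : sym nform := Sym (nf_mulK g) (nf_mulVK g).
Definition nf_perm_t : sym nform := Sym (nf_tK true) (nf_tK false).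

Lemma nf_action : exists F : H -> sym nform,
  [/\ is_hom F, forall g, F (iota g) = nf_perm_iota g & F t = nf_perm_t].
Proof.
case: hnn => _ _ /(_ _ nf_perm_iota nf_perm_t) [].
- by move=> x y; apply: sym_eq => w; apply: nform_eq => /=; rewrite mulgA.
- move=> a Aa; apply: sym_eq => w; apply: nform_eq => /=.
  by rewrite (act_t_mull _ (e := false)) // (act_tK true) //; apply: (svalP w).
by move=> F [[? ? ?] _]; exists F.
Qed.

(* [pinch u v]: the letters [t^u.2 v.1 t^v.2] collapse to an element of [G]. *)
Definition pinch (u v : G * bool) := (v.2 == ~~ u.2) && `[< tdom u.2 v.1 >].
Definition nopinch (u v : G * bool) := ~~ pinch u v.
Definition reduced (M : seq (G * bool)) := sorted nopinch M.

Lemma reduced_head g g' e M : reduced ((g, e) :: M) = reduced ((g', e) :: M).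
Proof. by case: M. Qed.

Definition nf0 : nform := exist _ (1, [::]) I.

Section Britton.
Variable F : H -> sym nform.
Hypotheses (FM : is_hom F) (F_iota : forall g, F (iota g) = nf_perm_iota g)
  (F_t : F t = nf_perm_t).

Lemma nf_act_tlet e w : sval (F (tlet e) w) = act_t e (sval w).
Proof. by case: e; rewrite /tlet ?(homV FM) F_t. Qed.

Lemma nf_act_iota g w : sval (F (iota g) w) = (g * (sval w).1, (sval w).2).
Proof. by rewrite F_iota. Qed.

(* The invariant [tdom (~~ e) x] keeps the next letter from cancelling. *)
Lemma nf_act_reduced e M y : reduced ((1, e) :: M) ->
  exists x r l, sval (F (tlet e * word_val M * iota y) nf0) = (x, (e, r) :: l)
                /\ tdom (~~ e) x.
Proof.
have sS := tdom_subgroup.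
elim: M e => [|[g' e'] M IH] e /=.
  move=> _; rewrite mulg1 FM symM nf_act_tlet nf_act_iota /= mulg1 /act_t /=.
  by do 3 eexists; split; [reflexivity | apply/tconj_tdom/(coset_repP (sS e))].
move=> /andP[nopinch_e red'].
have [x [r [l [E Sx]]]] := IH e' (etrans (reduced_head 1 g' e' M) red').
rewrite -!mulgA FM symM nf_act_tlet FM symM nf_act_iota !mulgA E /=.
set g0 := g' * x.
have push : ~~ ((coset_rep (tdom e) g0 == 1) && head_is (~~ e) ((e', r) :: l)).
  apply/negP => /andP[/eqP r1 /= /eqP Ee]; subst e'.
  move: nopinch_e; rewrite /nopinch /pinch /= eqxx /=; move/asboolPn; apply.
  move/(coset_rep_eq1 (sS e)): r1; rewrite negbK in Sx.
  by move=> Sg0; rewrite -(mulgK x g'); apply: (proj2 (sS e)).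
rewrite (act_t_push push); do 3 eexists; split; first reflexivity.
by apply/tconj_tdom/(coset_repP (sS e)).
Qed.

End Britton.

Lemma britton M y g : reduced M -> word_val M * iota y = iota g -> M = [::].
Proof.
case: M => [//|[g1 e1] M'] red E; exfalso.
have [F [FM F_iota F_t]] := nf_action.
have [x [r [l [E1 _]]]] :=
  nf_act_reduced FM F_iota F_t y (etrans (reduced_head 1 g1 e1 M') red).
have := congr1 (fun h => sval (F h nf0)) E => /=.
by rewrite -!mulgA FM symM (nf_act_iota F_iota) !mulgA E1 (nf_act_iota F_iota).
Qed.

Lemma shorten_word M y : ~~ reduced M ->
  exists N z, size N < size M /\ word_val M * iota y = word_val N * iota z.
Proof.
elim: M y => [|[g1 e1] M IH] y //.
case: M IH => [|[g2 e2] M2] IH //.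
rewrite /reduced /= => /nandP [|nred]; last first.
  have [N [z [ltN E]]] := IH y nred.
  by exists ((g1, e1) :: N), z; rewrite /= -[RHS]mulgA -E /= !mulgA.
rewrite negbK /pinch /= => /andP[/eqP -> /asboolP S2].
have [N [z [sizeN E]]] := word_mull (g1 * tconj e1 g2) M2 y.
exists N, z; split; first by rewrite sizeN ltnW.
by rewrite -E iotaM -(tlet_iota_tlet S2) /= !mulgA.
Qed.

Lemma reduce_word M y : exists N z,
  [/\ reduced N, size N <= size M & word_val M * iota y = word_val N * iota z].
Proof.
have [n le_Mn] := ubnP (size M); elim: n M le_Mn y => // n IH M le_Mn y.
have [redM|nredM] := boolP (reduced M); first by exists M, y.
have [N [z [ltNM ->]]] := shorten_word y nredM.
have [N' [z' [redN' leN' ->]]] := IH N (leq_trans ltNM le_Mn) z.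
by exists N', z'; split=> //; apply: leq_trans leN' (ltnW ltNM).
Qed.

Fixpoint word_inv (M : seq (G * bool)) (y : G) : seq (G * bool) * G :=
  match M with
  | [::] => ([::], y^-1)
  | (g, e) :: M' => (rcons (word_inv M' y).1 ((word_inv M' y).2, ~~ e), g^-1)
  end.

Lemma word_invE M y :
  (word_val M * iota y)^-1 = word_val (word_inv M y).1 * iota (word_inv M y).2.
Proof.
elim: M => [|[g e] M IH] /=; first by rewrite !mul1g iotaV.
by rewrite -mulgA invgM IH invgM tletV iotaV word_val_rcons /= !mulgA.
Qed.

Lemma size_word_inv M y : size (word_inv M y).1 = size M.
Proof. by elim: M => [|[g e] M IH] //=; rewrite size_rcons IH. Qed.

Lemma reduced_cat s a b s2 :
  reduced (rcons s a ++ b :: s2) =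
    [&& reduced (rcons s a), nopinch a b & reduced (b :: s2)].
Proof. by case: s => [|x s] //=; rewrite cat_path last_rcons. Qed.

Lemma reduced_word_inv M y : reduced M -> reduced (word_inv M y).1.
Proof.
elim: M => [|[g e] M IH] //=.
case: M IH => [|[g' e'] M'] IH //= /andP[np red].
rewrite -cats1 reduced_cat IH //= andbT {IH red}.
move: np; rewrite /nopinch /pinch /= subgroupVE; last exact: tdom_subgroup.
by case: e e' => -[].
Qed.

(* If [M^-1 N] collapses to an element of [G], Britton's lemma forces its two
   innermost stable letters to pinch; cancelling them gives shorter such words. *)
Lemma reduced_size_eq x M y N z : reduced M -> reduced N ->
  iota x * (word_val M * iota y) = word_val N * iota z -> size M = size N.
Proof.
have [n le_Mn] := ubnP (size M); elim: n x M le_Mn y N z => // n IH x.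
case=> [|[a e] M1] le_Mn y N z redM redN E.
  have := britton redN (y := z) (g := x * y).
  by rewrite -E /= mul1g iotaM => /(_ erefl) ->.
case: N redN E => [|[b f] N1] redN E.
  move: E; rewrite [word_val [::]]/= mul1g => E.
  have := britton redM (y := y) (g := x^-1 * z).
  by rewrite iotaM -E iotaV mulKg => /(_ erefl).
set a' := x * a; set W := rcons (word_inv M1 y).1 ((word_inv M1 y).2, ~~ e).
have {}E : iota a' * tlet e * (word_val M1 * iota y)
           = iota b * tlet f * (word_val N1 * iota z).
  by move: E; rewrite /a' iotaM /= !mulgA.
have EW : word_val (W ++ (a'^-1 * b, f) :: N1) * iota z = iota 1.
  have := word_invE ((a', e) :: M1) y; rewrite /= -/W -mulgA E => EMinv.
  have := mulVg (iota b * tlet f * (word_val N1 * iota z)).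
  by rewrite EMinv word_val_cat /= iotaM iota1 !mulgA.
have redW : reduced W := reduced_word_inv y (etrans (reduced_head a' a e M1) redM).
have : pinch ((word_inv M1 y).2, ~~ e) (a'^-1 * b, f).
  apply: contraT => np; have := britton _ EW.
  rewrite reduced_cat redW (reduced_head _ b) redN {1}/nopinch np => /(_ isT).
  by rewrite /W; case: (word_inv M1 y).1.
rewrite /pinch /= negbK => /andP[/eqP Ef /asboolP Sab]; subst f.
have Sba : tdom (~~ e) (b^-1 * a').
  by rewrite -(subgroupVE (tdom_subgroup _)) invgM invgK.
have E1 : iota (tconj (~~ e) (b^-1 * a')) * (word_val M1 * iota y) = word_val N1 * iota z.
  rewrite -(tlet_iota_tlet Sba) negbK.
  apply: (@mulgI _ (iota b * tlet e)); rewrite -E.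
  by rewrite -tletV iotaM iotaV !mulgA mulgK mulgV mul1g.
by congr S; apply: IH E1 => //; [move: redM | move: redN] => /path_sorted.
Qed.

Definition cyc_reduced (L : seq (G * bool)) :=
  if L is u :: L' then path nopinch u (rcons L' u) else false.

Lemma cyc_reduced_reduced L : cyc_reduced L -> reduced L.
Proof. by case: L => [|u L] //=; rewrite rcons_path => /andP[]. Qed.

Lemma nopinch_refl u : nopinch u u.
Proof. by case: u => g []. Qed.

Lemma cyc_reduced_pow L k : cyc_reduced L -> 0 < k -> cyc_reduced (flatten (nseq k L)).
Proof.
case: L => [|u L] //= cycL; case: k => [|k] //= _.
have rcons_pow j :
    rcons (flatten (nseq j (u :: L))) u = u :: flatten (nseq j (rcons L u)).
  by elim: j => [|j IH] //=; rewrite rcons_cat IH cat_rcons.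
rewrite rcons_cat rcons_pow -cat_rcons -[_ ++ _]/(flatten (nseq k.+1 (rcons L u))).
elim: k.+1 => [|j IH] //=.
by rewrite cat_path cycL last_rcons IH.
Qed.

Lemma word_val_pow L k : word_val (flatten (nseq k L)) = word_val L ^+ k.
Proof. by elim: k => [|k IH] //=; rewrite word_val_cat IH expgS. Qed.

Definition elliptic (h : H) := exists c g, h ^ c = iota g.
Definition hyperbolic (h : H) := exists c L, cyc_reduced L /\ h ^ c = word_val L.

Lemma ellipticJ h c : elliptic (h ^ c) -> elliptic h.
Proof. by case=> c' [g E]; exists (c * c'), g; rewrite conjgM. Qed.

Lemma hyperbolicJ h c : hyperbolic (h ^ c) -> hyperbolic h.
Proof. by case=> c' [L [cycL E]]; exists (c * c'), L; rewrite conjgM. Qed.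

Lemma hyperbolicX h k : hyperbolic h -> 0 < k -> hyperbolic (h ^+ k).
Proof.
case=> c [L [cycL E]] k_gt0; exists c, (flatten (nseq k L)).
by rewrite cyc_reduced_pow // word_val_pow -E conjXg.
Qed.

Lemma conj_first_letter v L w : ~~ nopinch w v ->
  word_val (v :: rcons L w) ^ (iota v.1 * tlet v.2)
  = word_val L * iota (w.1 * tconj w.2 v.1).
Proof.
rewrite /nopinch negbK /pinch => /andP[/eqP Ev /asboolP Sv].
rewrite conjgE word_val_cons -(mulgA _ (word_val _)) mulKg word_val_rcons Ev.
by rewrite iotaM -(tlet_iota_tlet Sv) !mulgA.
Qed.

Lemma elliptic_or_hyperbolic_word M y :
  elliptic (word_val M * iota y) \/ hyperbolic (word_val M * iota y).
Proof.
have [n le_Mn] := ubnP (size M); elim: n M le_Mn y => // n IH M le_Mn y.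
have [->|nzM] := eqVneq M [::]; first by left; exists 1, y; rewrite conjg1 mul1g.
set M' := word_lmul y M.
suff : elliptic (word_val M') \/ hyperbolic (word_val M').
  have -> : word_val M' = (word_val M * iota y) ^ (iota y)^-1.
    by rewrite word_val_lmul // conjgE invgK mulgK.
  by case=> [/ellipticJ|/hyperbolicJ]; [left | right].
have {}le_Mn : size M' < n.+1 by rewrite size_word_lmul.
have [redM'|nredM'] := boolP (reduced M'); last first.
  have [N [z [ltN E]]] := shorten_word 1 nredM'.
  by rewrite -[word_val M']mulg1 -iota1 E; apply: IH; apply: leq_trans ltN _.
have [cycM'|ncycM'] := boolP (cyc_reduced M').
  by right; exists 1, M'; rewrite conjg1.
clearbody M'; case: M' redM' ncycM' le_Mn => [|v L].
  by left; exists 1, 1; rewrite conjg1 iota1.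
case/lastP: L => [|L w] redM'.
  by rewrite /= nopinch_refl.
have redvw : path nopinch v (rcons L w) := redM'.
rewrite /cyc_reduced rcons_path last_rcons redvw /= => pinch_wv le_Mn.
have ltLn : size L < n by rewrite size_rcons !ltnS in le_Mn; apply: ltnW.
have := IH L ltLn (w.1 * tconj w.2 v.1); rewrite -(conj_first_letter L pinch_wv).
by case=> [/ellipticJ|/hyperbolicJ]; [left | right].
Qed.

Lemma elliptic_or_hyperbolic h : elliptic h \/ hyperbolic h.
Proof. by have [M [y ->]] := word_surj h; apply: elliptic_or_hyperbolic_word. Qed.

Lemma conj_iota_word x m y : exists N z,
  size N <= (size m).*2 /\ iota x ^ (word_val m * iota y) = word_val N * iota z.
Proof.
have [m' [z [size_m' E]]] := word_mull ((word_inv m y).2 * x) m y.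
exists ((word_inv m y).1 ++ m'), z; split.
  by rewrite size_cat size_word_inv size_m' addnn.
by rewrite conjgE word_invE word_val_cat -[RHS]mulgA -E iotaM !mulgA.
Qed.

Lemma hyperbolic_not_elliptic h : hyperbolic h -> ~ elliptic h.
Proof.
case=> c [L [cycL EL]] [c' [g Eg]].
have [m [y Ed]] := word_surj (c'^-1 * c).
set n := (size m).*2.+1.
have [N [z [sizeN EN]]] := conj_iota_word (g ^+ n) m y.
have [N' [z' [redN' leN' EN']]] := reduce_word N z.
have E : iota 1 * (word_val (flatten (nseq n L)) * iota 1) = word_val N' * iota z'.
  rewrite iota1 mul1g mulg1 word_val_pow -EL -EN' -EN -Ed (homX iotaM) -Eg.
  by rewrite -!conjXg -conjgM mulVKg.
have := reduced_size_eq (cyc_reduced_reduced (cyc_reduced_pow cycL _)) redN' E.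
rewrite size_flatten_nseq => /(_ isT) EnN.
have : n <= (size m).*2.
  apply: leq_trans (leq_trans leN' sizeN); rewrite -EnN leq_pmulr //.
  by case: L cycL {EL E EnN}.
by rewrite ltnn.
Qed.

End HNN.

Theorem corollary3p4 (G : groupType) (A B : G -> Prop) (phi : G -> G)
    (H : groupType) (iota : G -> H) (t : H) :
  is_subgroup A -> is_subgroup B -> is_iso_on A B phi ->
  is_HNN_extension A phi iota t ->
  forall g1 : G, ~ proper_power g1 ->
  (proper_power (iota g1) <->
   exists (k : nat) (g2 : G), (2 <= k)%N /\ exists c : H, (iota g1) ^ c = iota (g2 ^+ k)).
Proof.
move=> sA sB iso hnn g1 _; split.
  case=> h [k [k_ge2 Eg1]].
  have [[c [g Eh]]|hyp_h] := elliptic_or_hyperbolic iso hnn h.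
    by exists k, g; split=> //; exists c; rewrite Eg1 conjXg Eh (homX (iotaM hnn)).
  exfalso; apply: (hyperbolic_not_elliptic sA sB iso hnn (hyperbolicX hyp_h _)).
    by apply: leq_trans k_ge2.
  by rewrite -Eg1; exists 1, g1; rewrite conjg1.
case=> k [g2 [k_ge2 [c E]]].
exists (iota g2 ^ c^-1), k; split=> //.
by rewrite -conjXg -(homX (iotaM hnn)) -E conjgK.
Qed.
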